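(* Let $r\ge1$ and $\mu\in\mathcal P_r$. Then $\limsup_{n\to\infty} n\, d_r(\delta^{\mathbf u_n}_\bullet,\mu)>0$, unless $\mu=\delta_a$ for some $a\in\mathbb R$.
   Context: $\mathcal P$ denotes the set of Borel probability measures on $\mathbb R$; $\mathcal P_r=\{\mu\in\mathcal P:\int|x|^r{\rm d}\mu(x)<\infty\}$. For $\mu\in\mathcal P$, $F_\mu(x)=\mu(]-\infty,x])$ and $F_\mu^{-1}(t)=\sup\{x: F_\mu(x)\le t\}$, $t\in]0,1[$. $d_r(\mu,\nu)=\big(\int_0^1|F_\mu^{-1}(t)-F_\nu^{-1}(t)|^r{\rm d}t\big)^{1/r}$ on $\mathcal P_r$. With $\Xi_n=\{\mathbf x\in\mathbb R^n:x_1\le\dots\le x_n\}$ and $\delta^{\mathbf u_n}_{\mathbf x}=\frac1n\sum_{i=1}^n\delta_{x_i}$, set $d_r(\delta^{\mathbf u_n}_\bullet,\mu)=\min_{\mathbf x\in\Xi_n}d_r(\delta^{\mathbf u_n}_{\mathbf x},\mu)$ (the minimum is attained). *)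

From Stdlib Require Import Reals Lra Classical ClassicalEpsilon.
Open Scope R_scope.

(* A Borel probability measure on R is represented by its distribution
   function F_mu(x) = mu(]-oo,x]) (bijective correspondence). *)
Definition is_cdf (F : R -> R) : Prop :=
  (forall x y, x <= y -> F x <= F y) /\
  (forall x eps, 0 < eps -> exists delta, 0 < delta /\
      forall y, x <= y < x + delta -> Rabs (F y - F x) < eps) /\
  (forall eps, 0 < eps -> exists M, forall x, x <= M -> Rabs (F x) < eps) /\
  (forall eps, 0 < eps -> exists M, forall x, M <= x -> Rabs (F x - 1) < eps).

(* F^{-1}(t) = sup { x : F x <= t } (0 if the sup does not exist). *)
Definition quantile (F : R -> R) (t : R) : R :=
  match excluded_middle_informative
          (exists q, is_lub (fun x => F x <= t) q) with
  | left H => proj1_sig (constructive_indefinite_description _ H)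
  | right _ => 0
  end.

Definition rpow (x r : R) : R := if Rle_dec x 0 then 0 else Rpower x r.

(* Integral over ]0,1[ of a nonnegative function that is Riemann integrable
   on compact subintervals: sup of Riemann integrals over [a,b] in ]0,1[
   (the improper Riemann integral, equal to the Lebesgue integral). *)
Definition int01_is (f : R -> R) (I : R) : Prop :=
  is_lub (fun v => exists a b (pr : Riemann_integrable f a b),
            0 < a /\ a <= b /\ b < 1 /\ v = RiemannInt pr) I.

Definition int01 (f : R -> R) : R :=
  match excluded_middle_informative (exists I, int01_is f I) with
  | left H => proj1_sig (constructive_indefinite_description _ H)
  | right _ => 0
  end.

(* mu in P_r : int |x|^r dmu < oo, i.e. int_0^1 |F^{-1}(t)|^r dt < oo *)
Definition in_Pr (r : R) (F : R -> R) : Prop :=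
  exists I, int01_is (fun t => rpow (Rabs (quantile F t)) r) I.

(* Wasserstein distance d_r via quantile functions *)
Definition d_r (r : R) (F G : R -> R) : R :=
  rpow (int01 (fun t => rpow (Rabs (quantile F t - quantile G t)) r)) (1 / r).

Fixpoint count_le (n : nat) (x : nat -> R) (y : R) : nat :=
  match n with
  | O => O
  | S m => (count_le m x y + (if Rle_dec (x m) y then 1 else 0))%nat
  end.

(* distribution function of delta^{u_n}_x = (1/n) sum_{i<n} delta_{x_i} *)
Definition emp_cdf (n : nat) (x : nat -> R) (y : R) : R :=
  INR (count_le n x y) / INR n.

Definition in_Xi (n : nat) (x : nat -> R) : Prop :=
  forall i j, (i <= j < n)%nat -> x i <= x j.

Definition is_dirac (F : R -> R) (a : R) : Prop :=
  forall y, F y = if Rle_dec a y then 1 else 0.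

From Stdlib Require Import Reals Lra Lia RiemannInt_SF Classical ClassicalEpsilon.
From Coquelicot Require Import Coquelicot.
Open Scope R_scope.

(* Since mu is not a Dirac mass there are levels 0 < a < b < 1 with
   h := F^{-1}(b) - F^{-1}(a) > 0.  Let x be an n-point and x' an (n+1)-point
   configuration, with quantile functions Q and Q'.  Either Q stays h/4 away from
   F^{-1} on an interval of fixed length next to [a, b], or x rises by at least h/2
   between the levels a and b.  In the second case, around every node k/n the function
   Q' is constant while Q jumps by x_k - x_{k-1}, so on a window of width ~1/n one of
   |Q - F^{-1}|, |Q' - F^{-1}| is at least a quarter of the jump; by convexity of s^r
   these windows contribute at least a constant times n^{-r}.  Hence
   d_r(x)^r + d_r(x')^r >= K n^{-r} uniformly in x and x', so for each large n either
   n or n + 1 keeps n d_r bounded away from 0 over all configurations. *)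

Lemma IsStepFun_open_const (f : R -> R) (c d v : R) :
  c <= d -> (forall t, c < t < d -> f t = v) -> IsStepFun f c d.
Proof.
  intros Hcd Hf. exists (cons c (cons d nil)), (cons v nil).
  destruct (StepFun_P3 v Hcd) as [Hord [H0 [H1 [Hlen Hconst]]]].
  repeat split; auto.
  intros i Hi t Ht. destruct i as [|i]; [apply Hf, Ht | simpl in Hi; lia].
Qed.

Lemma RiemannInt_SF_open_const (f : R -> R) (c d v : R) (pr : IsStepFun f c d) :
  c <= d -> (forall t, c < t < d -> f t = v) -> RiemannInt_SF (mkStepFun pr) = v * (d - c).
Proof.
  intros Hcd Hf. rewrite <- (StepFun_P18 c d v).
  apply Rle_antisym; apply StepFun_P37; auto; intros t Ht; simpl; rewrite Hf by auto;
    unfold fct_cte; lra.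
Qed.

Definition grid_floor (a h t : R) : R := a + IZR (Int_part ((t - a) / h)) * h.

Lemma grid_floor_spec a h t : 0 < h -> grid_floor a h t <= t < grid_floor a h t + h.
Proof.
  intros Hh. unfold grid_floor. destruct (base_Int_part ((t - a) / h)) as [H1 H2].
  set (m := IZR (Int_part ((t - a) / h))) in *.
  assert (E : (t - a) / h * h = t - a) by (field; lra).
  split; nra.
Qed.

Lemma grid_floor_node a h t (k : nat) : 0 < h ->
  a + INR k * h < t < a + INR (S k) * h -> grid_floor a h t = a + INR k * h.
Proof.
  intros Hh Ht. unfold grid_floor. rewrite S_INR in Ht.
  destruct (base_Int_part ((t - a) / h)) as [H1 H2].
  assert (Hy : INR k < (t - a) / h < INR k + 1).
  { split; apply (Rmult_lt_reg_r h); auto; unfold Rdiv; rewrite Rmult_assoc, Rinv_l; lra. }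
  rewrite INR_IZR_INZ in Hy |- *.
  replace (Int_part ((t - a) / h)) with (Z.of_nat k); [reflexivity|].
  assert (IZR (Int_part ((t - a) / h)) < IZR (Z.of_nat k) + 1) by lra.
  assert (IZR (Z.of_nat k) - 1 < IZR (Int_part ((t - a) / h))) by lra.
  rewrite <- plus_IZR in *. rewrite <- minus_IZR in *.
  apply lt_IZR in H. apply lt_IZR in H0. lia.
Qed.

Section Grid.
Variables (a h : R).
Hypothesis Hh : 0 < h.

Let node k := a + INR k * h.

Lemma IsStepFun_grid_cell (w : R -> R) (k : nat) :
  IsStepFun (fun t => w (grid_floor a h t)) (node k) (node (S k)).
Proof.
  apply IsStepFun_open_const with (w (node k)).
  - unfold node; rewrite S_INR; lra.
  - intros t Ht. rewrite (grid_floor_node a h t k); auto.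
Qed.

Lemma IsStepFun_grid (w : R -> R) (k : nat) (c : R) :
  c = node k -> IsStepFun (fun t => w (grid_floor a h t)) a c.
Proof.
  intros ->. induction k as [|k IH].
  - assert (E0 : node 0 = a) by (unfold node; simpl; ring).
    apply IsStepFun_open_const with 0; rewrite E0; [lra | intros; lra].
  - apply StepFun_P46 with (node k); [exact IH | apply IsStepFun_grid_cell].
Qed.

Lemma RiemannInt_SF_grid_increment (u : R -> R) (k : nat) (c : R)
  (pr : IsStepFun (fun t => u (grid_floor a h t + h) - u (grid_floor a h t)) a c) :
  c = node k -> RiemannInt_SF (mkStepFun pr) = h * (u c - u a).
Proof.
  revert c pr. induction k as [|k IH]; intros c pr ->.
  - assert (E0 : node 0 = a) by (unfold node; simpl; ring).
    rewrite (RiemannInt_SF_open_const _ a (node 0) 0), E0; [ring | lra | intros; lra].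
  - set (w := fun s => u (s + h) - u s).
    change (fun t => u (grid_floor a h t + h) - u (grid_floor a h t))
      with (fun t => w (grid_floor a h t)) in pr |- *.
    rewrite <- (StepFun_P43 (IsStepFun_grid w k (node k) eq_refl) (IsStepFun_grid_cell w k) pr).
    rewrite (IH _ _ eq_refl).
    rewrite (RiemannInt_SF_open_const _ _ _ (w (node k))).
    + unfold w, node. rewrite S_INR.
      replace (a + (INR k + 1) * h) with (a + INR k * h + h) by ring. ring.
    + unfold node; rewrite S_INR; lra.
    + intros t Ht. unfold w. rewrite (grid_floor_node a h t k); auto.
Qed.
End Grid.

Lemma Riemann_integrable_nondecreasing (f : R -> R) (a b : R) : a <= b ->
  (forall s t, a <= s -> s <= t -> t <= b -> f s <= f t) -> Riemann_integrable f a b.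
Proof.
  intros Hab Hf. destruct (Rle_lt_dec b a) as [Hba|Hab'].
  { replace b with a by lra. apply RiemannInt_P7. }
  intros eps.
  (* on the uniform grid of mesh [h], [u (grid_floor t)] and [u (grid_floor t + h)]
     bracket [f t], and their difference integrates to [h * (f b - f a)] *)
  set (u := fun s => f (Rmin b (Rmax a s))).
  assert (Hu : forall s t, s <= t -> u s <= u t).
  { intros s t Hst. unfold u. apply Hf; unfold Rmin, Rmax;
      repeat destruct Rle_dec; lra. }
  assert (Huf : forall t, a <= t <= b -> u t = f t).
  { intros t Ht. unfold u. rewrite Rmax_right, Rmin_right; lra. }
  destruct (constructive_indefinite_description _
              (INR_unbounded ((b - a) * (f b - f a) / eps))) as [N HN].
  assert (Hfab : 0 <= f b - f a) by (assert (f a <= f b) by (apply Hf; lra); lra).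
  assert (HN0 : 0 < INR N).
  { assert (0 <= (b - a) * (f b - f a) / eps); [|lra].
    apply Rmult_le_pos; [nra | left; apply Rinv_0_lt_compat, cond_pos]. }
  set (h := (b - a) / INR N).
  assert (Hh : 0 < h) by (apply Rdiv_lt_0_compat; lra).
  assert (Eb : b = a + INR N * h) by (unfold h; field; lra).
  exists (mkStepFun (IsStepFun_grid a h Hh u N b Eb)).
  exists (mkStepFun (IsStepFun_grid a h Hh (fun s => u (s + h) - u s) N b Eb)).
  split.
  - intros t Ht. rewrite Rmin_left, Rmax_right in Ht by lra. simpl.
    destruct (grid_floor_spec a h t Hh).
    rewrite <- Huf by lra.
    assert (u (grid_floor a h t) <= u t) by (apply Hu; lra).
    assert (u t <= u (grid_floor a h t + h)) by (apply Hu; lra).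
    rewrite Rabs_right; lra.
  - rewrite (RiemannInt_SF_grid_increment a h Hh u N b _ Eb).
    rewrite !Huf by lra. rewrite Rabs_right by (apply Rle_ge, Rmult_le_pos; lra).
    apply (Rmult_lt_reg_r (INR N / eps)); [apply Rdiv_lt_0_compat; [lra | apply cond_pos]|].
    unfold h.
    replace ((b - a) / INR N * (f b - f a) * (INR N / eps)) with ((b - a) * (f b - f a) / eps)
      by (field; split; [apply Rgt_not_eq, cond_pos | lra]).
    replace (eps * (INR N / eps)) with (INR N) by (field; apply Rgt_not_eq, cond_pos). lra.
Qed.

Lemma rpow_ge0 x r : 0 <= rpow x r.
Proof. unfold rpow. destruct (Rle_dec x 0); [lra | left; apply exp_pos]. Qed.

Lemma rpow_Rpower x r : 0 < x -> rpow x r = Rpower x r.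
Proof. intros. unfold rpow. destruct (Rle_dec x 0); [lra | reflexivity]. Qed.

Lemma rpow_gt0 x r : 0 < x -> 0 < rpow x r.
Proof. intros. rewrite rpow_Rpower by auto. apply exp_pos. Qed.

Lemma rpow_le_compat x y r : 0 <= r -> x <= y -> rpow x r <= rpow y r.
Proof.
  intros Hr Hxy. unfold rpow. destruct (Rle_dec x 0), (Rle_dec y 0).
  - lra.
  - left; apply exp_pos.
  - lra.
  - apply Rle_Rpower_l; lra.
Qed.

Lemma rpow_le_1 x r : 0 <= r -> x <= 1 -> rpow x r <= 1.
Proof.
  intros Hr Hx. apply Rle_trans with (rpow 1 r); [apply rpow_le_compat; auto|].
  rewrite rpow_Rpower by lra. unfold Rpower. rewrite ln_1, Rmult_0_r, exp_0. lra.
Qed.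

Lemma rpow_Rabs u r : rpow (Rabs u) r = rpow u r + rpow (- u) r.
Proof.
  unfold rpow, Rabs. destruct (Rcase_abs u), (Rle_dec u 0), (Rle_dec (- u) 0),
    (Rle_dec (- u) 0), (Rle_dec u 0); lra.
Qed.

Lemma rpow_mult x y r : 0 <= x -> 0 <= y -> rpow (x * y) r = rpow x r * rpow y r.
Proof.
  intros Hx Hy. destruct (Req_dec x 0) as [->|Hx0]; [|destruct (Req_dec y 0) as [->|Hy0]].
  - rewrite Rmult_0_l. unfold rpow. destruct (Rle_dec 0 0); [ring | lra].
  - rewrite Rmult_0_r. unfold rpow at 1 3. destruct (Rle_dec 0 0); [ring | lra].
  - rewrite !rpow_Rpower by (try apply Rmult_lt_0_compat; lra).
    symmetry; apply Rpower_mult_distr; lra.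
Qed.

Lemma rpow_mult_self y r : 0 < y -> y * rpow y (r - 1) = rpow y r.
Proof.
  intros Hy. rewrite !rpow_Rpower by auto.
  replace r with (1 + (r - 1)) at 2 by ring. rewrite Rpower_plus, Rpower_1 by auto. ring.
Qed.

Lemma rpow_inv_exponent E r : 0 < r -> 0 < E -> rpow (rpow E r) (1 / r) = E.
Proof.
  intros Hr HE. rewrite (rpow_Rpower E), rpow_Rpower by (try apply exp_pos; lra).
  rewrite Rpower_mult. replace (r * (1 / r)) with 1 by (field; lra). apply Rpower_1; lra.
Qed.

Lemma rpow_tangent_lb s sg r : 1 <= r -> 0 < sg -> 0 <= s ->
  (s - sg) * rpow sg (r - 1) <= rpow s r.
Proof.
  intros Hr Hsg Hs. pose proof (rpow_gt0 sg (r - 1) Hsg).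
  destruct (Rle_dec s sg).
  - pose proof (rpow_ge0 s r). nra.
  - rewrite <- (rpow_mult_self s r) by lra.
    assert (rpow sg (r - 1) <= rpow s (r - 1)) by (apply rpow_le_compat; lra).
    nra.
Qed.

Lemma rpow_half_dist u q w r : 0 <= r ->
  rpow (Rabs (u - w) / 2) r <= rpow (Rabs (u - q)) r + rpow (Rabs (w - q)) r.
Proof.
  intros Hr. pose proof (rpow_ge0 (Rabs (u - q)) r). pose proof (rpow_ge0 (Rabs (w - q)) r).
  assert (Rabs (u - w) <= Rabs (u - q) + Rabs (w - q)).
  { replace (u - w) with ((u - q) + (q - w)) by ring.
    rewrite (Rabs_minus_sym w q). apply Rabs_triang. }
  destruct (Rle_dec (Rabs (u - q)) (Rabs (w - q))).
  - assert (rpow (Rabs (u - w) / 2) r <= rpow (Rabs (w - q)) r) by (apply rpow_le_compat; lra). lra.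
  - assert (rpow (Rabs (u - w) / 2) r <= rpow (Rabs (u - q)) r) by (apply rpow_le_compat; lra). lra.
Qed.

Lemma rpow_jump_lb u w v r : 0 <= r -> u <= w ->
  rpow ((w - u) / 4) r <= rpow (Rabs (u - v) / 2) r + rpow (Rabs (w - v) / 2) r.
Proof.
  intros Hr Huw.
  pose proof (rpow_ge0 (Rabs (u - v) / 2) r). pose proof (rpow_ge0 (Rabs (w - v) / 2) r).
  assert (w - u <= Rabs (u - v) + Rabs (w - v)) by (unfold Rabs; repeat destruct Rcase_abs; lra).
  destruct (Rle_dec (w - u) (2 * Rabs (u - v))).
  - assert (rpow ((w - u) / 4) r <= rpow (Rabs (u - v) / 2) r) by (apply rpow_le_compat; lra). lra.
  - assert (rpow ((w - u) / 4) r <= rpow (Rabs (w - v) / 2) r) by (apply rpow_le_compat; lra). lra.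
Qed.

Lemma quantile_is_lub G t : (exists q, is_lub (fun x => G x <= t) q) ->
  is_lub (fun x => G x <= t) (quantile G t).
Proof.
  intros H. unfold quantile. destruct (excluded_middle_informative _) as [H'|H'].
  - exact (proj2_sig (constructive_indefinite_description _ H')).
  - contradiction.
Qed.

Lemma quantile_eq G t q : is_lub (fun x => G x <= t) q -> quantile G t = q.
Proof.
  intros H. apply (is_lub_u (fun x => G x <= t)); [| exact H].
  apply quantile_is_lub. eauto.
Qed.

Lemma quantile_le G s t : s <= t ->
  (exists q, is_lub (fun x => G x <= s) q) -> (exists q, is_lub (fun x => G x <= t) q) ->
  quantile G s <= quantile G t.
Proof.
  intros Hst Hs Ht. apply quantile_is_lub in Hs. apply quantile_is_lub in Ht.
  apply Hs. intros x Hx. apply Ht. lra.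
Qed.

Section Cdf.
Variable F : R -> R.
Hypothesis HF : is_cdf F.

Lemma cdf_range y : 0 <= F y <= 1.
Proof.
  destruct HF as [Hm [Hr [H0 H1]]]. split.
  - apply Rnot_lt_le; intro Hlt.
    destruct (H0 (- F y)) as [M HM]. lra.
    specialize (HM (Rmin M y) (Rmin_l _ _)).
    assert (F (Rmin M y) <= F y) by (apply Hm, Rmin_r).
    apply Rabs_def2 in HM. lra.
  - apply Rnot_lt_le; intro Hlt.
    destruct (H1 (F y - 1)) as [M HM]. lra.
    specialize (HM (Rmax M y) (Rmax_l _ _)).
    assert (F y <= F (Rmax M y)) by (apply Hm, Rmax_r).
    apply Rabs_def2 in HM. lra.
Qed.

Lemma cdf_level_has_lub t : 0 < t < 1 -> exists q, is_lub (fun x => F x <= t) q.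
Proof.
  intros Ht. destruct HF as [Hm [Hr [H0 H1]]].
  destruct (H0 t) as [M HM]; [lra|].
  destruct (H1 (1 - t)) as [M' HM']; [lra|].
  destruct (completeness (fun x => F x <= t)) as [q Hq].
  - exists M'. intros x Hx. apply Rnot_lt_le; intro Hlt.
    specialize (HM' x (Rlt_le _ _ Hlt)). apply Rabs_def2 in HM'. lra.
  - exists M. specialize (HM M (Rle_refl _)). apply Rabs_def2 in HM. lra.
  - exists q; exact Hq.
Qed.

Lemma cdf_quantile_le s t : 0 < s -> s <= t -> t < 1 -> quantile F s <= quantile F t.
Proof. intros. apply quantile_le; try apply cdf_level_has_lub; lra. Qed.

Lemma quantile_const_is_dirac c : (forall t, 0 < t < 1 -> quantile F t = c) -> is_dirac F c.
Proof.
  intros Hconst y. destruct HF as [Hm [Hr _]]. destruct (cdf_range y) as [Fy0 Fy1].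
  destruct (Rle_dec c y) as [Hcy|Hcy].
  - destruct (Rle_lt_or_eq_dec _ _ Fy1) as [Hlt|]; [exfalso | assumption].
    (* right continuity keeps F below 1 just right of y *)
    destruct (Hr y ((1 - F y) / 2)) as [d [Hd Hdy]]; [lra|].
    specialize (Hdy (y + d / 2) ltac:(lra)). apply Rabs_def2 in Hdy.
    set (t := (F (y + d / 2) + 1) / 2).
    assert (Ht : 0 < t < 1) by (pose proof (cdf_range (y + d / 2)); unfold t; lra).
    assert (Hq : y + d / 2 <= quantile F t).
    { apply (quantile_is_lub F t (cdf_level_has_lub t Ht)). unfold t; lra. }
    rewrite Hconst in Hq by assumption. lra.
  - destruct (Rle_lt_or_eq_dec _ _ Fy0) as [Hlt|]; [exfalso | auto].
    set (t := F y / 2).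
    assert (Ht : 0 < t < 1) by (unfold t; lra).
    assert (Hq : quantile F t <= y).
    { apply (quantile_is_lub F t (cdf_level_has_lub t Ht)). intros x Hx.
      apply Rnot_lt_le; intro Hyx. assert (F y <= F x) by (apply Hm; lra). unfold t in Hx. lra. }
    rewrite Hconst in Hq by assumption. lra.
Qed.

Lemma not_dirac_quantile_lt : ~ (exists a, is_dirac F a) ->
  exists a b, 0 < a /\ a < b /\ b < 1 /\ quantile F a < quantile F b.
Proof.
  intros Hnd. apply NNPP; intro Hc. apply Hnd. exists (quantile F (1 / 2)).
  apply quantile_const_is_dirac. intros t Ht.
  assert (Hnlt : forall s u, 0 < s -> s < u -> u < 1 -> quantile F u <= quantile F s).
  { intros s u Hs Hsu Hu. apply Rnot_lt_le; intro Hlt. apply Hc. exists s, u. auto. }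
  destruct (Rtotal_order t (1 / 2)) as [Hlt|[->|Hgt]].
  - apply Rle_antisym; [apply cdf_quantile_le | apply Hnlt]; lra.
  - reflexivity.
  - apply Rle_antisym; [apply Hnlt | apply cdf_quantile_le]; lra.
Qed.

End Cdf.

Lemma count_le_bound n x y : (count_le n x y <= n)%nat.
Proof. induction n; simpl; [lia|]. destruct (Rle_dec (x n) y); lia. Qed.

Lemma count_le_mono m n x y : (m <= n)%nat -> (count_le m x y <= count_le n x y)%nat.
Proof.
  induction 1; [lia|]. simpl. destruct (Rle_dec (x m0) y); lia.
Qed.

Lemma count_le_all m x y : (forall i, (i < m)%nat -> x i <= y) -> count_le m x y = m.
Proof.
  induction m; intros H; simpl; [reflexivity|].
  rewrite IHm by (intros; apply H; lia).
  destruct (Rle_dec (x m) y) as [|n]; [lia| exfalso; apply n, H; lia].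
Qed.

Lemma count_le_above n k x y : (k <= n)%nat -> (forall i, (k <= i < n)%nat -> y < x i) ->
  (count_le n x y <= k)%nat.
Proof.
  induction n; intros Hk H; simpl; [lia|].
  destruct (Nat.eq_dec k (S n)) as [->|Hne].
  - pose proof (count_le_bound n x y). destruct (Rle_dec (x n) y); lia.
  - destruct (Rle_dec (x n) y) as [r|].
    + exfalso. specialize (H n ltac:(lia)). lra.
    + rewrite Nat.add_0_r. apply IHn; [lia|]. intros; apply H; lia.
Qed.

Lemma emp_cdf_level_lub N x k t : (0 < N)%nat -> in_Xi N x -> (k < N)%nat ->
  INR k / INR N <= t < INR (S k) / INR N ->
  is_lub (fun y => emp_cdf N x y <= t) (x k).
Proof.
  intros HN Hx Hk Ht.
  assert (HNr : 0 < INR N) by (apply lt_0_INR; lia).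
  assert (Ht1 : INR k <= t * INR N) by (apply Rle_div_l; [lra | apply Ht]).
  assert (Ht2 : t * INR N < INR (S k)) by (apply Rlt_div_r; [lra | apply Ht]).
  assert (Hemp : forall y, emp_cdf N x y <= t <-> INR (count_le N x y) <= t * INR N)
    by (intros y; apply Rle_div_l; lra).
  split.
  - intros y Hy. apply Hemp in Hy. apply Rnot_lt_le; intro Hlt.
    assert (Hc : (S k <= count_le N x y)%nat).
    { rewrite <- (count_le_all (S k) x y). apply count_le_mono. lia.
      intros i Hi. apply Rle_trans with (x k). apply Hx; lia. lra. }
    apply le_INR in Hc. lra.
  - intros M HM. apply Rnot_lt_le; intro Hlt.
    set (y := (M + x k) / 2).
    assert (y <= M).
    { apply HM. apply Hemp.
      assert (Hc : (count_le N x y <= k)%nat).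
      { apply count_le_above. lia. intros i Hi.
        assert (x k <= x i) by (apply Hx; lia). unfold y; lra. }
      apply le_INR in Hc. lra. }
    unfold y in H; lra.
Qed.

Lemma emp_quantile_cell N x k t : (0 < N)%nat -> in_Xi N x -> (k < N)%nat ->
  INR k / INR N <= t < INR (S k) / INR N -> quantile (emp_cdf N x) t = x k.
Proof. intros. apply quantile_eq. apply emp_cdf_level_lub; auto. Qed.

Lemma grid_cell_exists N t : (0 < N)%nat -> 0 <= t < 1 ->
  exists k, (k < N)%nat /\ INR k / INR N <= t < INR (S k) / INR N.
Proof.
  intros HN Ht.
  assert (HNr : 0 < INR N) by (apply lt_0_INR; lia).
  set (P := fun k => INR k / INR N <= t).
  assert (Hgen : forall m, P 0%nat -> ~ P m -> exists k, (k < m)%nat /\ P k /\ ~ P (S k)).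
  { induction m; intros H0 Hm. contradiction.
    destruct (classic (P m)) as [Hp|Hp].
    - exists m. split; [lia|auto].
    - destruct (IHm H0 Hp) as [k [Hk1 Hk2]]. exists k. split; [lia|auto]. }
  destruct (Hgen N) as [k [Hk [Hp Hnp]]].
  - unfold P. simpl. unfold Rdiv. rewrite Rmult_0_l. lra.
  - unfold P. unfold Rdiv. rewrite Rinv_r by lra. lra.
  - exists k. split; [auto|]. unfold P in *. split; [auto| lra].
Qed.

Lemma emp_cdf_level_has_lub N x t : (0 < N)%nat -> in_Xi N x -> 0 <= t < 1 ->
  exists q, is_lub (fun y => emp_cdf N x y <= t) q.
Proof.
  intros HN Hx Ht. destruct (grid_cell_exists N t HN Ht) as [k [Hk Hkt]].
  exists (x k). apply emp_cdf_level_lub; auto.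
Qed.

Lemma emp_quantile_le N x s t : (0 < N)%nat -> in_Xi N x -> 0 <= s -> s <= t -> t < 1 ->
  quantile (emp_cdf N x) s <= quantile (emp_cdf N x) t.
Proof. intros. apply quantile_le; auto; apply emp_cdf_level_has_lub; auto; lra. Qed.

Lemma emp_quantile_bound N x t : (0 < N)%nat -> in_Xi N x -> 0 <= t < 1 ->
  Rabs (quantile (emp_cdf N x) t) <= Rabs (x 0%nat) + Rabs (x (N - 1)%nat).
Proof.
  intros HN Hx Ht. destruct (grid_cell_exists N t HN Ht) as [k [Hk Hkt]].
  rewrite (emp_quantile_cell N x k t) by auto.
  assert (x 0%nat <= x k) by (apply Hx; lia).
  assert (x k <= x (N-1)%nat) by (apply Hx; lia).
  unfold Rabs; repeat destruct Rcase_abs; lra.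
Qed.

Lemma Riemann_integrable_nonincreasing f a b : a <= b ->
  (forall s t, a <= s -> s <= t -> t <= b -> f t <= f s) ->
  Riemann_integrable f a b.
Proof.
  intros Hab Hm.
  apply Riemann_integrable_ext with (fun t => - (- f t)).
  { intros; ring. }
  apply Riemann_integrable_Ropp. apply Riemann_integrable_nondecreasing; auto.
  intros s t Hs Hst Ht. specialize (Hm s t Hs Hst Ht). lra.
Qed.

Lemma Riemann_integrable_rpow_dist (Q : R -> R) v r a b : 0 <= r -> a <= b ->
  (forall s t, a <= s -> s <= t -> t <= b -> Q s <= Q t) ->
  Riemann_integrable (fun t => rpow (Rabs (v - Q t)) r) a b.
Proof.
  intros Hr Hab HQ.
  apply Riemann_integrable_ext with (fun t => rpow (v - Q t) r + 1 * rpow (- (v - Q t)) r).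
  { intros. rewrite rpow_Rabs. ring. }
  apply RiemannInt_P10.
  - apply Riemann_integrable_nonincreasing; auto. intros s t Hs Hst Ht. apply rpow_le_compat; auto.
    specialize (HQ s t Hs Hst Ht). lra.
  - apply Riemann_integrable_nondecreasing; auto. intros s t Hs Hst Ht. apply rpow_le_compat; auto.
    specialize (HQ s t Hs Hst Ht). lra.
Qed.

Definition qgap (r : R) (G F : R -> R) (t : R) : R :=
  rpow (Rabs (quantile G t - quantile F t)) r.

Lemma d_r_qgap r G F : d_r r G F = rpow (int01 (qgap r G F)) (1 / r).
Proof. reflexivity. Qed.

Definition int01_bounded (f : R -> R) : Prop :=
  exists B, forall a b (pr : Riemann_integrable f a b),
    0 < a -> a <= b -> b < 1 -> RiemannInt pr <= B.

Lemma int01_ge_RInt f : int01_bounded f -> forall u v, 0 < u -> u <= v -> v < 1 -> ex_RInt f u v ->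
  RInt f u v <= int01 f.
Proof.
  intros [B HB] u v Hu Huv Hv Hex.
  set (pr := ex_RInt_Reals_0 f u v Hex).
  rewrite (RInt_Reals f u v pr).
  set (S := fun w => exists a b (pr : Riemann_integrable f a b),
            0 < a /\ a <= b /\ b < 1 /\ w = RiemannInt pr).
  assert (HS : S (RiemannInt pr)) by (exists u, v, pr; auto).
  destruct (completeness S) as [I HI].
  - exists B. intros w [a [b [p [H1 [H2 [H3 ->]]]]]]. apply HB; auto.
  - eauto.
  - unfold int01. destruct (excluded_middle_informative _) as [H|H].
    + pose proof (proj2_sig (constructive_indefinite_description _ H)) as Hl.
      simpl in Hl. apply Hl. exact HS.
    + exfalso. apply H. exists I. exact HI.
Qed.

Lemma int01_ge0 f : int01_bounded f -> 0 <= int01 f.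
Proof.
  intros Hb. pose proof (int01_ge_RInt f Hb (1/2) (1/2)) as H.
  rewrite RInt_point in H. apply H; try lra. apply ex_RInt_point.
Qed.

(* Pointwise [|u - q|^r <= (2M)^r + 2^r |q|^r], and [|F^{-1}|^r] has bounded integrals. *)
Lemma int01_bounded_qgap F r G M : 1 <= r -> is_cdf F -> in_Pr r F ->
  (forall t, 0 < t < 1 -> Rabs (quantile G t) <= M) ->
  int01_bounded (qgap r G F).
Proof.
  intros Hr HF [IQ HIQ] HM.
  assert (M0 : 0 <= M).
  { specialize (HM (1 / 2) ltac:(lra)). pose proof (Rabs_pos (quantile G (1 / 2))). lra. }
  set (c := rpow (2 * M) r).
  assert (Hc : 0 <= c) by apply rpow_ge0.
  set (p2 := Rpower 2 r).
  assert (Hp2 : 0 < p2) by (unfold p2, Rpower; apply exp_pos).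
  exists (c + p2 * IQ). intros a b pr Ha Hab Hb.
  assert (Hq : Riemann_integrable (fun t => rpow (Rabs (quantile F t)) r) a b).
  { apply Riemann_integrable_ext with (fun t => rpow (Rabs (0 - quantile F t)) r).
    { intros. f_equal. rewrite Rminus_0_l, Rabs_Ropp. reflexivity. }
    apply Riemann_integrable_rpow_dist; [lra|auto|]. intros. apply cdf_quantile_le; auto; lra. }
  pose proof (RiemannInt_P10 p2 (RiemannInt_P14 a b c) Hq) as Hg.
  apply Rle_trans with (RiemannInt Hg).
  - apply RiemannInt_P19; auto. intros t Ht. unfold fct_cte, qgap.
    set (u := quantile G t). set (q := quantile F t).
    assert (Hu : Rabs u <= M) by (apply HM; lra).
    assert (Htr : Rabs (u - q) <= Rabs u + Rabs q).
    { unfold Rminus. rewrite <- (Rabs_Ropp q). apply Rabs_triang. }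
    pose proof (rpow_ge0 (Rabs q) r).
    destruct (Rle_dec (Rabs q) M).
    + assert (rpow (Rabs (u - q)) r <= c) by (apply rpow_le_compat; lra). nra.
    + assert (rpow (Rabs (u - q)) r <= rpow (2 * Rabs q) r) by (apply rpow_le_compat; lra).
      rewrite rpow_mult in H0 by (pose proof (Rabs_pos q); lra).
      rewrite (rpow_Rpower 2) in H0 by lra. fold p2 in H0. lra.
  - rewrite (RiemannInt_P12 (RiemannInt_P14 a b c) Hq Hg Hab).
    rewrite RiemannInt_P15.
    assert (RiemannInt Hq <= IQ) by (apply HIQ; exists a, b, Hq; auto).
    nra.
Qed.

Lemma INR_div_pos k N : (0 < k)%nat -> (0 < N)%nat -> 0 < INR k / INR N.
Proof. intros. apply Rdiv_lt_0_compat; apply lt_0_INR; lia. Qed.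

Lemma INR_div_lt_1 k N : (k < N)%nat -> INR k / INR N < 1.
Proof.
  intros HkN. apply Rlt_div_l; [apply lt_0_INR; lia|]. rewrite Rmult_1_l. apply lt_INR, HkN.
Qed.

Lemma INR_div_le k m N : (k <= m)%nat -> (0 < N)%nat -> INR k / INR N <= INR m / INR N.
Proof.
  intros. assert (0 < INR N) by (apply lt_0_INR; lia). apply le_INR in H.
  unfold Rdiv. apply Rmult_le_compat_r; auto. left; apply Rinv_0_lt_compat; auto.
Qed.

Lemma RInt_ge_const (f : R -> R) (u v c : R) : u <= v -> ex_RInt f u v ->
  (forall t, u < t < v -> c <= f t) -> (v - u) * c <= RInt f u v.
Proof.
  intros Huv Hex Hc. apply Rle_trans with (RInt (fun _ => c) u v).
  - rewrite RInt_const. apply Rle_refl.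
  - apply RInt_le; auto. apply ex_RInt_const.
Qed.

Section EmpiricalGap.
Variables (r : R) (F : R -> R) (N : nat) (x : nat -> R).
Hypotheses (HF : is_cdf F) (Hx : in_Xi N x).

Lemma ex_RInt_qgap_emp_cell k : 0 <= r -> (1 <= k)%nat -> (k + 2 <= N)%nat ->
  ex_RInt (qgap r (emp_cdf N x) F) (INR k / INR N) (INR (S k) / INR N).
Proof.
  intros Hr Hk HkN.
  assert (H0 : 0 < INR k / INR N) by (apply INR_div_pos; lia).
  assert (H1 : INR (S k) / INR N < 1) by (apply INR_div_lt_1; lia).
  assert (H01 : INR k / INR N <= INR (S k) / INR N) by (apply INR_div_le; lia).
  apply ex_RInt_ext with (fun t => rpow (Rabs (x k - quantile F t)) r).
  - intros t Ht. rewrite Rmin_left, Rmax_right in Ht by auto.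
    unfold qgap. rewrite (emp_quantile_cell N x k t); auto; lia || lra.
  - apply ex_RInt_Reals_1, Riemann_integrable_rpow_dist; auto.
    intros. apply cdf_quantile_le; auto; lra.
Qed.

Lemma ex_RInt_qgap_emp lo hi : 0 <= r -> (2 <= N)%nat ->
  1 / INR N <= lo -> lo <= hi -> hi <= 1 - 1 / INR N -> ex_RInt (qgap r (emp_cdf N x) F) lo hi.
Proof.
  intros Hr HN HL HLR HR.
  assert (HNr : 0 < INR N) by (apply lt_0_INR; lia).
  assert (Hcells : forall d, (d + 2 <= N)%nat ->
    ex_RInt (qgap r (emp_cdf N x) F) (INR 1 / INR N) (INR (1 + d) / INR N)).
  { induction d as [|d IH]; intros Hd; [apply ex_RInt_point|].
    apply ex_RInt_Chasles with (INR (1 + d) / INR N); [apply IH; lia|].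
    replace (1 + S d)%nat with (S (1 + d)) by lia. apply ex_RInt_qgap_emp_cell; auto; lia. }
  pose proof (Hcells (N - 2)%nat ltac:(lia)) as Hc.
  replace (1 + (N - 2))%nat with (N - 1)%nat in Hc by lia.
  rewrite minus_INR in Hc by lia. simpl INR in Hc.
  replace ((INR N - 1) / INR N) with (1 - 1 / INR N) in Hc by (field; lra).
  apply (ex_RInt_Chasles_2 (V := R_CompleteNormedModule)) with (1 / INR N); [lra|].
  apply (ex_RInt_Chasles_1 (V := R_CompleteNormedModule)) with (1 - 1 / INR N); [lra | exact Hc].
Qed.

Lemma int01_bounded_qgap_emp : 1 <= r -> in_Pr r F -> (0 < N)%nat ->
  int01_bounded (qgap r (emp_cdf N x) F).
Proof.
  intros Hr HP HN. apply int01_bounded_qgap with (Rabs (x 0%nat) + Rabs (x (N - 1)%nat)); auto.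
  intros t Ht. apply emp_quantile_bound; auto; lra.
Qed.

Lemma int01_qgap_emp_ge_const u v c : 1 <= r -> in_Pr r F -> (2 <= N)%nat ->
  1 / INR N <= u -> u <= v -> v <= 1 - 1 / INR N ->
  (forall t, u < t < v -> c <= qgap r (emp_cdf N x) F t) ->
  (v - u) * c <= int01 (qgap r (emp_cdf N x) F).
Proof.
  intros Hr HP HN Hu Huv Hv Hc.
  assert (HNr : 0 < 1 / INR N) by (apply Rdiv_lt_0_compat; [lra | apply lt_0_INR; lia]).
  assert (Hex : ex_RInt (qgap r (emp_cdf N x) F) u v) by (apply ex_RInt_qgap_emp; auto; lra).
  apply Rle_trans with (RInt (qgap r (emp_cdf N x) F) u v).
  - apply RInt_ge_const; auto.
  - apply int01_ge_RInt; auto; try lra. apply int01_bounded_qgap_emp; auto; lia.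
Qed.

End EmpiricalGap.

Lemma window_in_succ_cell (n k : nat) (l : R) : (0 < n)%nat -> 0 < l ->
  l <= INR k / INR n <= 1 - l ->
  INR k / INR (S n) <= INR k / INR n - l / (2 * (INR n + 1)) /\
  INR k / INR n + l / (2 * (INR n + 1)) < INR (S k) / INR (S n).
Proof.
  intros Hn Hl Hp. assert (Hnn : 0 < INR n) by (apply lt_0_INR; lia).
  rewrite !S_INR. set (p := INR k / INR n) in *.
  replace (INR k) with (p * INR n) by (unfold p; field; lra).
  split.
  - assert (E : p - l / (2 * (INR n + 1)) - p * INR n / (INR n + 1)
                = (2 * p - l) / (2 * (INR n + 1))) by (field; lra).
    assert (0 <= (2 * p - l) / (2 * (INR n + 1))) by (apply Rdiv_le_0_compat; lra). lra.
  - assert (E : (p * INR n + 1) / (INR n + 1) - (p + l / (2 * (INR n + 1)))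
                = (2 - 2 * p - l) / (2 * (INR n + 1))) by (field; lra).
    assert (0 < (2 - 2 * p - l) / (2 * (INR n + 1))) by (apply Rdiv_lt_0_compat; lra). lra.
Qed.

Section Core.
Variables (r : R) (F : R -> R) (a b : R).
Hypotheses (Hr : 1 <= r) (HF : is_cdf F) (HP : in_Pr r F) (Ha : 0 < a) (Hab : a < b) (Hb : b < 1)
  (HQ : quantile F a < quantile F b).

Let gap := quantile F b - quantile F a.
Let margin := Rmin a (1 - b) / 2.

Lemma margin_spec : 0 < margin /\ margin <= a / 2 /\ margin <= (1 - b) / 2.
Proof.
  unfold margin. pose proof (Rmin_l a (1 - b)). pose proof (Rmin_r a (1 - b)).
  assert (0 < Rmin a (1 - b)) by (apply Rmin_glb_lt; lra). lra.
Qed.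

(* [Kjump] is [rad * (sg/4)^(r-1)/4 * gap/4] with [rad = margin/(2(n+1))] and
   [sg = gap/(4n)] (see [RInt_qsum_jumps]), once [n] is bounded by [n + 1]. *)
Let Kjump := margin * gap * rpow (gap / 16) (r - 1) / 32.
Let K := Rmin (margin * rpow (gap / 4) r) Kjump.

Lemma K_gt0 : 0 < K.
Proof.
  destruct margin_spec as [Hm _]. assert (Hg : 0 < gap) by (unfold gap; lra).
  unfold K, Kjump. apply Rmin_glb_lt.
  - apply Rmult_lt_0_compat; auto. apply rpow_gt0. lra.
  - apply Rdiv_lt_0_compat; [|lra]. apply Rmult_lt_0_compat; [nra|]. apply rpow_gt0. lra.
Qed.

Section Pair.
Variables (n : nat) (x x' : nat -> R).
Hypotheses (Hn : (2 <= n)%nat) (Hnm : 1 / INR n <= margin / 2)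
  (Hx : in_Xi n x) (Hx' : in_Xi (S n) x').

Let rad := margin / (2 * (INR n + 1)).
Let Lo := margin / 2.
Let Hi := 1 - margin / 2.
Let qsum t := qgap r (emp_cdf n x) F t + qgap r (emp_cdf (S n) x') F t.

Lemma INR_n_gt0 : 0 < INR n.
Proof. apply lt_0_INR. lia. Qed.

Lemma rad_spec : 0 < rad /\ 2 * rad <= 1 / INR n /\ rad <= margin / 2.
Proof.
  pose proof INR_n_gt0. destruct margin_spec as [Hm [Hma Hmb]]. unfold rad.
  split; [|split].
  - apply Rdiv_lt_0_compat; lra.
  - assert (E : 1 / INR n - 2 * (margin / (2 * (INR n + 1)))
                = (INR n + 1 - margin * INR n) / (INR n * (INR n + 1))) by (field; lra).
    assert (0 <= (INR n + 1 - margin * INR n) / (INR n * (INR n + 1)))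
      by (apply Rdiv_le_0_compat; nra).
    lra.
  - apply Rmult_le_reg_r with (2 * (INR n + 1)); [lra|]. field_simplify; [nra | lra].
Qed.

Lemma ex_RInt_qgap_pair u v : Lo <= u -> u <= v -> v <= Hi ->
  ex_RInt (qgap r (emp_cdf n x) F) u v /\ ex_RInt (qgap r (emp_cdf (S n) x') F) u v.
Proof.
  intros Hu Huv Hv. pose proof INR_n_gt0. destruct margin_spec as [Hm _].
  assert (HSn : 1 / INR (S n) <= 1 / INR n).
  { rewrite S_INR. apply Rmult_le_compat_l; [lra|]. apply Rinv_le_contravar; lra. }
  split; apply ex_RInt_qgap_emp; auto; try lia; unfold Lo, Hi in *; lra.
Qed.

Lemma ex_RInt_qsum u v : Lo <= u -> u <= v -> v <= Hi -> ex_RInt qsum u v.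
Proof.
  intros Hu Huv Hv. destruct (ex_RInt_qgap_pair u v) as [H1 H2]; auto.
  apply (ex_RInt_plus (V := R_CompleteNormedModule)); auto.
Qed.

Lemma RInt_qsum_ge0 u v : Lo <= u -> u <= v -> v <= Hi -> 0 <= RInt qsum u v.
Proof.
  intros. apply RInt_ge_0; auto; [apply ex_RInt_qsum; auto|].
  intros t _. unfold qsum, qgap. apply Rplus_le_le_0_compat; apply rpow_ge0.
Qed.

Lemma RInt_qsum_Chasles u v w : Lo <= u -> u <= v -> v <= w -> w <= Hi ->
  RInt qsum u w = RInt qsum u v + RInt qsum v w.
Proof.
  intros. symmetry. apply (RInt_Chasles (V := R_CompleteNormedModule)); apply ex_RInt_qsum; lra.
Qed.

(* Around a node [k/n] the quantile of [x'] is constant while that of [x] jumps from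
   [x (k-1)] to [x k]; one of the two gaps must absorb half of the jump. *)
Lemma RInt_qsum_window k : (1 <= k)%nat -> (k < n)%nat -> margin <= INR k / INR n <= 1 - margin ->
  rad * rpow ((x k - x (k - 1)%nat) / 4) r <= RInt qsum (INR k / INR n - rad) (INR k / INR n + rad).
Proof.
  intros Hk1 Hkn Hp. pose proof INR_n_gt0 as Hnn.
  destruct margin_spec as [Hm _]. destruct rad_spec as [Hd1 [Hd2 Hd3]].
  destruct (window_in_succ_cell n k margin ltac:(lia) Hm Hp) as [Hlo Hhi]. fold rad in Hlo, Hhi.
  set (p := INR k / INR n) in *.
  assert (Hprev : INR (k - 1) / INR n = p - 1 / INR n).
  { rewrite minus_INR by lia. simpl INR. unfold p. field. lra. }
  assert (Hnext : INR (S k) / INR n = p + 1 / INR n) by (rewrite S_INR; unfold p; field; lra).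
  assert (Q' : forall t, p - rad < t < p + rad -> quantile (emp_cdf (S n) x') t = x' k).
  { intros t Ht. apply emp_quantile_cell; auto; lia || lra. }
  assert (Ql : forall t, p - rad < t < p -> quantile (emp_cdf n x) t = x (k - 1)%nat).
  { intros t Ht. apply emp_quantile_cell; auto; try lia.
    replace (S (k - 1)) with k by lia. fold p. lra. }
  assert (Qr : forall t, p < t < p + rad -> quantile (emp_cdf n x) t = x k).
  { intros t Ht. apply emp_quantile_cell; auto; try lia. fold p. lra. }
  assert (Hin : Lo <= p - rad /\ p + rad <= Hi) by (unfold Lo, Hi; lra).
  assert (HL : rad * rpow (Rabs (x (k - 1)%nat - x' k) / 2) r <= RInt qsum (p - rad) p).
  { replace rad with (p - (p - rad)) at 1 by ring.
    apply RInt_ge_const; [lra | apply ex_RInt_qsum; lra|].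
    intros t Ht. unfold qsum, qgap. rewrite Q', Ql by lra. apply rpow_half_dist. lra. }
  assert (HR : rad * rpow (Rabs (x k - x' k) / 2) r <= RInt qsum p (p + rad)).
  { replace rad with (p + rad - p) at 1 by ring.
    apply RInt_ge_const; [lra | apply ex_RInt_qsum; lra|].
    intros t Ht. unfold qsum, qgap. rewrite Q', Qr by lra. apply rpow_half_dist. lra. }
  rewrite (RInt_qsum_Chasles (p - rad) p (p + rad)) by lra.
  assert (Hjump := rpow_jump_lb (x (k - 1)%nat) (x k) (x' k) r ltac:(lra) ltac:(apply Hx; lia)).
  nra.
Qed.

Lemma RInt_qsum_jumps (sg : R) (kA kB : nat) : 0 < sg -> (kB < n)%nat ->
  (forall k, (kA < k <= kB)%nat -> margin <= INR k / INR n <= 1 - margin) ->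
  Lo <= INR kA / INR n + rad -> INR kB / INR n + rad <= Hi ->
  forall d, (kA + d <= kB)%nat ->
  rad * (rpow (sg / 4) (r - 1) / 4) * ((x (kA + d)%nat - x kA) - INR d * sg)
    <= RInt qsum Lo (INR (kA + d) / INR n + rad).
Proof.
  intros Hsg HkB Hrange Hbase Htop. pose proof INR_n_gt0 as Hnn.
  destruct rad_spec as [Hd1 [Hd2 Hd3]].
  set (c0 := rpow (sg / 4) (r - 1) / 4).
  assert (Hc0 : 0 <= c0) by (unfold c0; pose proof (rpow_ge0 (sg / 4) (r - 1)); lra).
  assert (HkB' : forall k, (k <= kB)%nat -> INR k / INR n <= INR kB / INR n)
    by (intros; apply INR_div_le; lia).
  induction d as [|d IHd]; intros Hd.
  - rewrite Nat.add_0_r. simpl INR. replace ((x kA - x kA) - 0 * sg) with 0 by ring.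
    rewrite Rmult_0_r. pose proof (HkB' kA ltac:(lia)). apply RInt_qsum_ge0; lra.
  - set (k := (kA + S d)%nat).
    set (q := INR (kA + d) / INR n).
    assert (Hk : INR k / INR n = q + 1 / INR n).
    { unfold k, q. replace (kA + S d)%nat with (S (kA + d)) by lia. rewrite S_INR. field. lra. }
    assert (HW := RInt_qsum_window k ltac:(unfold k; lia) ltac:(unfold k; lia)
                    (Hrange k ltac:(unfold k; lia))).
    replace (k - 1)%nat with (kA + d)%nat in HW by (unfold k; lia).
    rewrite Hk in HW |- *.
    assert (Hq : Lo <= q + rad).
    { pose proof (INR_div_le kA (kA + d) n ltac:(lia) ltac:(lia)). unfold q. lra. }
    assert (Hkq : q + 1 / INR n <= INR kB / INR n) by (rewrite <- Hk; apply HkB'; unfold k; lia).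
    specialize (IHd ltac:(lia)). fold q in IHd.
    rewrite (RInt_qsum_Chasles Lo (q + rad) (q + 1 / INR n + rad)) by lra.
    rewrite (RInt_qsum_Chasles (q + rad) (q + 1 / INR n - rad) (q + 1 / INR n + rad)) by lra.
    pose proof (RInt_qsum_ge0 (q + rad) (q + 1 / INR n - rad) ltac:(lra) ltac:(lra) ltac:(lra)).
    assert (Hs : x (kA + d)%nat <= x k) by (apply Hx; unfold k; lia).
    assert (Htan := rpow_tangent_lb ((x k - x (kA + d)%nat) / 4) (sg / 4) r Hr
                      ltac:(lra) ltac:(lra)).
    assert (rad * c0 * ((x k - x (kA + d)%nat) - sg) <= rad * rpow ((x k - x (kA + d)%nat) / 4) r).
    { rewrite Rmult_assoc. apply Rmult_le_compat_l; [lra|]. unfold c0. lra. }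
    rewrite S_INR. fold c0 in IHd |- *. nra.
Qed.

Lemma RInt_qsum_le_int01 :
  RInt qsum Lo Hi <= int01 (qgap r (emp_cdf n x) F) + int01 (qgap r (emp_cdf (S n) x') F).
Proof.
  destruct margin_spec as [Hm [Hma Hmb]].
  destruct (ex_RInt_qgap_pair Lo Hi) as [H1 H2]; unfold Lo, Hi; try lra.
  unfold qsum. rewrite (RInt_plus (V := R_CompleteNormedModule)) by auto.
  apply Rplus_le_compat; apply int01_ge_RInt; auto; try lra;
    apply int01_bounded_qgap_emp; auto; lia.
Qed.

Lemma jumps_le_int01 (sg : R) (kA kB : nat) : 0 < sg -> (kA <= kB < n)%nat ->
  (forall k, (kA < k <= kB)%nat -> margin <= INR k / INR n <= 1 - margin) ->
  Lo <= INR kA / INR n + rad -> INR kB / INR n + rad <= Hi ->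
  rad * (rpow (sg / 4) (r - 1) / 4) * ((x kB - x kA) - INR (kB - kA) * sg) <=
    int01 (qgap r (emp_cdf n x) F) + int01 (qgap r (emp_cdf (S n) x') F).
Proof.
  intros Hsg HkAB Hrange Hbase Htop. destruct rad_spec as [Hd1 _].
  pose proof (RInt_qsum_jumps sg kA kB Hsg ltac:(lia) Hrange Hbase Htop (kB - kA) ltac:(lia))
    as Hjumps.
  replace (kA + (kB - kA))%nat with kB in Hjumps by lia.
  assert (HkAB' : INR kA / INR n <= INR kB / INR n) by (apply INR_div_le; lia).
  pose proof RInt_qsum_le_int01 as Hint.
  rewrite (RInt_qsum_Chasles Lo (INR kB / INR n + rad) Hi) in Hint by lra.
  pose proof (RInt_qsum_ge0 (INR kB / INR n + rad) Hi ltac:(lra) Htop (Rle_refl _)). lra.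
Qed.

Lemma Kjump_le_jumps : Kjump * rpow (1 / INR (S n)) r <=
  rad * (rpow (gap / (4 * INR n) / 4) (r - 1) / 4) * (gap / 4).
Proof.
  pose proof INR_n_gt0 as Hnn. destruct margin_spec as [Hm _].
  assert (Hg : 0 < gap) by (unfold gap; lra).
  set (y := 1 / INR (S n)).
  assert (Hy : 0 < y) by (unfold y; rewrite S_INR; apply Rdiv_lt_0_compat; lra).
  assert (Hdl : rad = margin / 2 * y) by (unfold rad, y; rewrite S_INR; field; lra).
  assert (Hmono : rpow (gap / 16 * y) (r - 1) <= rpow (gap / (4 * INR n) / 4) (r - 1)).
  { apply rpow_le_compat; [lra|]. unfold y. rewrite S_INR.
    replace (gap / (4 * INR n) / 4) with (gap / 16 * (1 / INR n)) by (field; lra).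
    apply Rmult_le_compat_l; [lra|]. apply Rmult_le_compat_l; [lra|].
    apply Rinv_le_contravar; lra. }
  rewrite rpow_mult in Hmono by lra.
  rewrite <- (rpow_mult_self y r), Hdl by lra. unfold Kjump.
  pose proof (rpow_ge0 (gap / 16) (r - 1)). pose proof (rpow_ge0 y (r - 1)).
  assert (0 <= margin * gap) by nra.
  assert (margin * gap * (rpow (gap / 16) (r - 1) * rpow y (r - 1)) <=
          margin * gap * rpow (gap / (4 * INR n) / 4) (r - 1)) by (apply Rmult_le_compat_l; lra).
  nra.
Qed.

Let Qn := quantile (emp_cdf n x).

Lemma int01_qgap_emp_ge_right : Qn (b + margin) < quantile F b - gap / 4 ->
  margin * rpow (gap / 4) r <= int01 (qgap r (emp_cdf n x) F).
Proof.
  intros C. destruct margin_spec as [Hm [Hma Hmb]].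
  replace margin with (b + margin - b) at 1 by ring.
  apply int01_qgap_emp_ge_const; auto; try lra.
  intros t Ht. unfold qgap. fold Qn. apply rpow_le_compat; [lra|].
  assert (Qn t <= Qn (b + margin)) by (unfold Qn; apply emp_quantile_le; auto; lia || lra).
  assert (quantile F b <= quantile F t) by (apply cdf_quantile_le; auto; lra).
  rewrite Rabs_left1; unfold gap in *; lra.
Qed.

Lemma int01_qgap_emp_ge_left : quantile F a + gap / 4 < Qn (a - margin) ->
  margin * rpow (gap / 4) r <= int01 (qgap r (emp_cdf n x) F).
Proof.
  intros C. destruct margin_spec as [Hm [Hma Hmb]].
  replace margin with (a - (a - margin)) at 1 by ring.
  apply int01_qgap_emp_ge_const; auto; try lra.
  intros t Ht. unfold qgap. fold Qn. apply rpow_le_compat; [lra|].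
  assert (Qn (a - margin) <= Qn t) by (unfold Qn; apply emp_quantile_le; auto; lia || lra).
  assert (quantile F t <= quantile F a) by (apply cdf_quantile_le; auto; lra).
  rewrite Rabs_right; unfold gap in *; lra.
Qed.

(* If [Qn] is within [gap/4] of [quantile F] at both [a - margin] and [b + margin], then
   [x] rises by at least [gap/2] over at most [n] steps. *)
Lemma qgap_pair_ge_rise :
  quantile F b - gap / 4 <= Qn (b + margin) -> Qn (a - margin) <= quantile F a + gap / 4 ->
  Kjump * rpow (1 / INR (S n)) r <=
    int01 (qgap r (emp_cdf n x) F) + int01 (qgap r (emp_cdf (S n) x') F).
Proof.
  intros CB CA. pose proof INR_n_gt0 as Hnn. destruct rad_spec as [Hd1 [Hd2 Hd3]].
  destruct margin_spec as [Hm [Hma Hmb]]. assert (Hg : 0 < gap) by (unfold gap; lra).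
  destruct (grid_cell_exists n (a - margin) ltac:(lia) ltac:(lra)) as [kA [HkAn HkA]].
  destruct (grid_cell_exists n (b + margin) ltac:(lia) ltac:(lra)) as [kB [HkBn HkB]].
  assert (QA : Qn (a - margin) = x kA) by (apply emp_quantile_cell; auto; lia).
  assert (QB : Qn (b + margin) = x kB) by (apply emp_quantile_cell; auto; lia).
  assert (Hrise : gap / 2 <= x kB - x kA) by (unfold gap in *; lra).
  assert (HkAB : (kA <= kB)%nat).
  { destruct (Nat.le_gt_cases kA kB); auto. assert (x kB <= x kA) by (apply Hx; lia). lra. }
  assert (HSA : INR (S kA) / INR n = INR kA / INR n + 1 / INR n) by (rewrite S_INR; field; lra).
  assert (Hrange : forall k, (kA < k <= kB)%nat -> margin <= INR k / INR n <= 1 - margin).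
  { intros k Hk. pose proof (INR_div_le (S kA) k n ltac:(lia) ltac:(lia)).
    pose proof (INR_div_le k kB n ltac:(lia) ltac:(lia)). lra. }
  set (sg := gap / (4 * INR n)).
  assert (Hsg : 0 < sg) by (unfold sg; apply Rdiv_lt_0_compat; lra).
  assert (Hsteps : INR (kB - kA) * sg <= gap / 4).
  { unfold sg. apply Rmult_le_reg_r with (4 * INR n); [lra|].
    replace (INR (kB - kA) * (gap / (4 * INR n)) * (4 * INR n)) with (INR (kB - kA) * gap)
      by (field; lra).
    assert (INR (kB - kA) <= INR n) by (apply le_INR; lia). nra. }
  pose proof (jumps_le_int01 sg kA kB Hsg ltac:(lia) Hrange ltac:(unfold Lo; lra)
                ltac:(unfold Hi; lra)).
  pose proof Kjump_le_jumps as HK. fold sg in HK.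
  assert (0 <= rad * (rpow (sg / 4) (r - 1) / 4))
    by (pose proof (rpow_ge0 (sg / 4) (r - 1)); apply Rmult_le_pos; lra).
  assert (rad * (rpow (sg / 4) (r - 1) / 4) * (gap / 4) <=
          rad * (rpow (sg / 4) (r - 1) / 4) * ((x kB - x kA) - INR (kB - kA) * sg))
    by (apply Rmult_le_compat_l; lra).
  lra.
Qed.

Lemma qgap_pair_lb : K * rpow (1 / INR (S n)) r <=
  int01 (qgap r (emp_cdf n x) F) + int01 (qgap r (emp_cdf (S n) x') F).
Proof.
  pose proof INR_n_gt0 as Hnn.
  assert (E1 : 0 <= int01 (qgap r (emp_cdf n x) F))
    by (apply int01_ge0, int01_bounded_qgap_emp; auto; lia).
  assert (E2 : 0 <= int01 (qgap r (emp_cdf (S n) x') F))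
    by (apply int01_ge0, int01_bounded_qgap_emp; auto; lia).
  assert (Hy : rpow (1 / INR (S n)) r <= 1).
  { apply rpow_le_1; [lra|]. rewrite S_INR. apply (Rmult_le_reg_r (INR n + 1)); [lra|].
    field_simplify; lra. }
  pose proof (rpow_ge0 (1 / INR (S n)) r). pose proof K_gt0.
  assert (K * rpow (1 / INR (S n)) r <= K) by nra.
  assert (HK1 : K <= margin * rpow (gap / 4) r) by apply Rmin_l.
  assert (HK2 : K <= Kjump) by apply Rmin_r.
  destruct (Rlt_dec (Qn (b + margin)) (quantile F b - gap / 4)) as [C1|C1].
  { pose proof (int01_qgap_emp_ge_right C1). lra. }
  destruct (Rlt_dec (quantile F a + gap / 4) (Qn (a - margin))) as [C2|C2].
  { pose proof (int01_qgap_emp_ge_left C2). lra. }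
  pose proof (qgap_pair_ge_rise (Rnot_lt_le _ _ C1) (Rnot_lt_le _ _ C2)).
  assert (K * rpow (1 / INR (S n)) r <= Kjump * rpow (1 / INR (S n)) r)
    by (apply Rmult_le_compat_r; lra).
  lra.
Qed.

End Pair.

Lemma qgap_consecutive_lb : exists K, 0 < K /\ exists n0, forall n, (n0 <= n)%nat ->
  forall x x', in_Xi n x -> in_Xi (S n) x' ->
  K * rpow (1 / INR (S n)) r <=
    int01 (qgap r (emp_cdf n x) F) + int01 (qgap r (emp_cdf (S n) x') F).
Proof.
  exists K. split; [exact K_gt0|].
  destruct margin_spec as [Hm _].
  destruct (INR_unbounded (2 / margin)) as [n0 Hn0].
  exists (n0 + 2)%nat. intros n Hn x x' Hx Hx'.
  assert (Hnn : INR n0 <= INR n) by (apply le_INR; lia).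
  apply qgap_pair_lb; auto; [lia|].
  assert (0 < INR n) by (apply lt_0_INR; lia).
  apply (Rmult_le_reg_r (2 * INR n / margin)); [apply Rdiv_lt_0_compat; lra|].
  replace (1 / INR n * (2 * INR n / margin)) with (2 / margin) by (field; lra).
  replace (margin / 2 * (2 * INR n / margin)) with (INR n) by (field; lra). lra.
Qed.

End Core.

Lemma consecutive_root_lb (r K E1 E2 : R) (M : nat) : 1 <= r -> 0 < K -> (1 <= M)%nat ->
  K * rpow (1 / INR (S M)) r <= E1 + E2 ->
  rpow (K / 2) (1 / r) / 2 <= INR M * rpow E1 (1 / r) \/
  rpow (K / 2) (1 / r) / 2 <= INR (S M) * rpow E2 (1 / r).
Proof.
  intros Hr HK HM HE.
  set (c := rpow (K / 2) (1 / r)). set (y := 1 / INR (S M)) in *.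
  assert (HMr : 1 <= INR M) by (apply (le_INR 1); lia).
  assert (HSM : INR (S M) = INR M + 1) by apply S_INR.
  assert (Hy : 0 < y) by (unfold y; rewrite HSM; apply Rdiv_lt_0_compat; lra).
  assert (Hc : 0 < c) by (apply rpow_gt0; lra).
  assert (Hroot : rpow (K * rpow y r / 2) (1 / r) = c * y).
  { replace (K * rpow y r / 2) with (K / 2 * rpow y r) by field.
    rewrite rpow_mult by (try apply rpow_ge0; lra). rewrite rpow_inv_exponent by lra. reflexivity. }
  assert (H1r : 0 <= 1 / r) by (left; apply Rdiv_lt_0_compat; lra).
  set (T := K * rpow y r) in *.
  destruct (Rle_dec (T / 2) E1) as [C1|C1]; [left | right].
  - assert (c * y <= rpow E1 (1 / r)) by (rewrite <- Hroot; apply rpow_le_compat; lra).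
    assert (Hhalf : 1 / 2 <= INR M * y).
    { unfold y. rewrite HSM. apply (Rmult_le_reg_r (INR M + 1)); [lra|].
      replace (INR M * (1 / (INR M + 1)) * (INR M + 1)) with (INR M) by (field; lra). lra. }
    nra.
  - assert (c * y <= rpow E2 (1 / r)) by (rewrite <- Hroot; apply rpow_le_compat; lra).
    assert (INR (S M) * y = 1) by (unfold y; field; lra).
    nra.
Qed.

Theorem theorem5p7 (r : R) (F : R -> R) :
  1 <= r -> is_cdf F -> in_Pr r F ->
  ~ (exists a : R, is_dirac F a) ->
  exists eps : R, 0 < eps /\
    forall N : nat, exists n : nat, (N <= n)%nat /\
      forall x : nat -> R, in_Xi n x ->
        eps <= INR n * d_r r (emp_cdf n x) F.
Proof.
  intros Hr HF HP Hnd.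
  destruct (not_dirac_quantile_lt F HF Hnd) as (a & b & Ha & Hab & Hb & HQ).
  destruct (qgap_consecutive_lb r F a b Hr HF HP Ha Hab Hb HQ) as (K & HK & n0 & Hn0).
  exists (rpow (K / 2) (1 / r) / 2). split; [pose proof (rpow_gt0 (K / 2) (1 / r)); lra|].
  intros N. set (M := (N + n0 + 1)%nat).
  destruct (classic (forall x, in_Xi M x ->
              rpow (K / 2) (1 / r) / 2 <= INR M * d_r r (emp_cdf M x) F)) as [G1|G1];
    [exists M; split; [unfold M; lia | exact G1]|].
  destruct (classic (forall x, in_Xi (S M) x ->
              rpow (K / 2) (1 / r) / 2 <= INR (S M) * d_r r (emp_cdf (S M) x) F)) as [G2|G2];
    [exists (S M); split; [unfold M; lia | exact G2]|].
  exfalso.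
  apply not_all_ex_not in G1 as [x G1]. apply imply_to_and in G1 as [Hx G1].
  apply not_all_ex_not in G2 as [x' G2]. apply imply_to_and in G2 as [Hx' G2].
  rewrite d_r_qgap in G1, G2.
  destruct (consecutive_root_lb r K _ _ M Hr HK ltac:(unfold M; lia)
              (Hn0 M ltac:(unfold M; lia) x x' Hx Hx')); contradiction.
Qed.
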